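(* Let $E$ be a Euclidean space. For closed subsets $V,W$ of $E$ we have $\tau(W\cap V)\geqslant\min\big(\tau(W),\tau(W\cap\partial V)\big)$.
   Context: For nonempty $A\subseteq E$, $d_A(x)=\inf_{p\in A}\|x-p\|$, and $d_\varnothing=+\infty$. For a nonempty closed $A\subseteq E$, the medial axis of $A$ is the closure of $\Delta_A=\{x\in E:\exists p\neq q\in A,\ \|x-p\|=\|x-q\|=d_A(x)\}$; the reach of $A$ at $p\in A$ is $\tau(A,p)=d_{\Delta_A}(p)$, and the reach of $A$ is $\tau(A)=\inf_{p\in A}\tau(A,p)$. By convention $\tau(\varnothing)=+\infty$. $\partial V$ is the topological boundary of $V$ in $E$. *)

From HB Require Import structures.
From mathcomp Require Import all_boot all_order all_algebra.
From mathcomp Require Import all_classical all_reals all_analysis.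
Set Implicit Arguments. Unset Strict Implicit. Unset Printing Implicit Defensive.
Import Order.TTheory GRing.Theory Num.Theory.
Import numFieldNormedType.Exports.
Local Open Scope classical_set_scope.
Local Open Scope ring_scope.

(* The topology on 'rV[R]_n is the canonical one (induced by
   the max norm), which coincides with the Euclidean topology. *)

Section Reach.
Variables (R : realType) (n : nat).
Local Notation E := 'rV[R]_n.

Definition enorm (x : E) : R := Num.sqrt (\sum_(i < n) (x ord0 i) ^+ 2).
Definition edist (x y : E) : R := enorm (x - y).

(* d_A(x) = inf_{p in A} ||x - p||, with d_emptyset = +oo (ereal_inf set0 = +oo) *)
Definition dist_set (A : set E) (x : E) : \bar R :=
  ereal_inf [set (edist x p)%:E | p in A].

Definition Delta (A : set E) : set E :=
  [set x | exists p q, [/\ A p, A q, p <> q,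
      (edist x p)%:E = dist_set A x & (edist x q)%:E = dist_set A x]].

Definition medial_axis (A : set E) : set E := closure (Delta A).

Definition reach_at (A : set E) (p : E) : \bar R := dist_set (medial_axis A) p.

(* reach of A; reach of the empty set is +oo (ereal_inf set0 = +oo) *)
Definition reach (A : set E) : \bar R := ereal_inf [set reach_at A p | p in A].

Definition boundary (V : set E) : set E := closure V `\` interior V.

End Reach.

(* Let x lie in Delta(W ∩ V), with nearest points a ≠ b in W ∩ V at distance r below both
   reaches.  If the open ball B(x, r) misses W, then a and b are nearest points of W too, so
   x ∈ Delta(W) and τ(W) ≤ r.  Otherwise a ∈ ∂V: shrink B(x, r) to the balls through a
   centred on [x, a] until they stop meeting W.  As r < τ(W), a is the only nearest point of
   W from that centre, so the points of W met by slightly larger balls tend to a; they lie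
   in B(x, r), hence outside V.  Likewise b ∈ ∂V, so x ∈ Delta(W ∩ ∂V) and τ(W ∩ ∂V) ≤ r.
   Distances to Delta and to its closure agree, which passes the bound to the medial axis. *)

From Pilot Require Import Defs.
From HB Require Import structures.
From mathcomp Require Import all_boot all_order all_algebra.
From mathcomp Require Import all_classical all_reals all_analysis.
From mathcomp Require Import ring lra.
Set Implicit Arguments. Unset Strict Implicit. Unset Printing Implicit Defensive.
Import Order.TTheory GRing.Theory Num.Theory.
Import numFieldNormedType.Exports.
Local Open Scope classical_set_scope.
Local Open Scope ring_scope.

(* MathComp-Analysis also has an [edist] (the extended distance of a pseudometric space). *)
Local Notation edist := Defs.edist.

Lemma lipschitz_continuous (R : realType) (V : normedModType R) (f : V -> R) (k : R) :
  0 < k -> (forall x y, `|f x - f y| <= k * `|x - y|) -> continuous f.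
Proof.
move=> k0 fk x; apply/cvgrPdist_lt => e e0.
have ek : 0 < e / k by rewrite divr_gt0.
near=> y; apply: le_lt_trans (fk x y) _.
by rewrite mulrC -ltr_pdivlMr //; near: y; exact: cvgr_dist_lt.
Unshelve. all: by end_near.
Qed.

Section Euclidean.
Variables (R : realType) (n : nat).
Local Notation E := 'rV[R]_n.

Definition dot (u v : E) : R := \sum_(i < n) u ord0 i * v ord0 i.

Lemma dotvv_ge0 (u : E) : 0 <= dot u u.
Proof. by apply: sumr_ge0 => i _; rewrite -expr2 sqr_ge0. Qed.

Lemma enormE (u : E) : enorm u = Num.sqrt (dot u u).
Proof. by congr Num.sqrt; apply: eq_bigr => i _; rewrite expr2. Qed.

Lemma dotDD (u v : E) : dot (u + v) (u + v) = dot u u + dot u v *+ 2 + dot v v.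
Proof.
by rewrite /dot -sumrMnl -!big_split; apply: eq_bigr => i _; rewrite !mxE /=; ring.
Qed.

(* Lagrange's identity: the defect is the sum of the squares (u_i v_j - u_j v_i)^2. *)
Lemma sqr_dot_le (u v : E) : dot u v ^+ 2 <= dot u u * dot v v.
Proof.
pose uuvv i j := u ord0 i * u ord0 i * (v ord0 j * v ord0 j).
pose uvuv i j := u ord0 i * v ord0 i * (u ord0 j * v ord0 j).
have lagrange : \sum_i \sum_j (u ord0 i * v ord0 j - u ord0 j * v ord0 i) ^+ 2
    = \sum_i \sum_j uuvv i j + \sum_i \sum_j uuvv j i - (\sum_i \sum_j uvuv i j) *+ 2.
  rewrite -big_split -sumrMnl -sumrB; apply: eq_bigr => i _.
  rewrite -big_split -sumrMnl -sumrB; apply: eq_bigr => j _; rewrite /uuvv /uvuv /=.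
  by ring.
have uuvvE : \sum_i \sum_j uuvv i j = dot u u * dot v v.
  by rewrite /dot mulr_suml; apply: eq_bigr => i _; rewrite mulr_sumr.
have uuvvC : \sum_i \sum_j uuvv j i = \sum_i \sum_j uuvv i j by rewrite exchange_big.
have uvuvE : \sum_i \sum_j uvuv i j = dot u v ^+ 2.
  by rewrite /dot expr2 mulr_suml; apply: eq_bigr => i _; rewrite mulr_sumr.
have : 0 <= \sum_i \sum_j (u ord0 i * v ord0 j - u ord0 j * v ord0 i) ^+ 2.
  by apply: sumr_ge0 => i _; apply: sumr_ge0 => j _; exact: sqr_ge0.
rewrite lagrange uuvvC uuvvE uvuvE; lra.
Qed.

Lemma enorm_ge0 (u : E) : 0 <= enorm u.
Proof. exact: sqrtr_ge0. Qed.

Lemma enormD (u v : E) : enorm (u + v) <= enorm u + enorm v.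
Proof.
rewrite !enormE; have uu := dotvv_ge0 u; have vv := dotvv_ge0 v.
rewrite -(ger0_norm (addr_ge0 (sqrtr_ge0 (dot u u)) (sqrtr_ge0 (dot v v)))).
rewrite -sqrtr_sqr ler_sqrt ?sqr_ge0 // dotDD sqrrD !sqr_sqrtr //.
suff : dot u v <= Num.sqrt (dot u u) * Num.sqrt (dot v v) by lra.
rewrite -sqrtrM //; apply: le_trans (ler_norm _) _.
by rewrite -sqrtr_sqr ler_sqrt ?mulr_ge0 // sqr_dot_le.
Qed.

Lemma enormN (u : E) : enorm (- u) = enorm u.
Proof. by congr Num.sqrt; apply: eq_bigr => i _; rewrite mxE sqrrN. Qed.

Lemma enormZ (c : R) (u : E) : enorm (c *: u) = `|c| * enorm u.
Proof.
rewrite /enorm -sqrtr_sqr -sqrtrM ?sqr_ge0 //; congr Num.sqrt.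
by rewrite mulr_sumr; apply: eq_bigr => i _; rewrite mxE exprMn.
Qed.

Lemma normr_coord_le_enorm (u : E) i : `|u ord0 i| <= enorm u.
Proof.
rewrite /enorm -sqrtr_sqr ler_sqrt; last by apply: sumr_ge0 => j _; exact: sqr_ge0.
by rewrite (bigD1 i) //= lerDl; apply: sumr_ge0 => j _; exact: sqr_ge0.
Qed.

Lemma mxnorm_le_enorm (u : E) : `|u| <= enorm u.
Proof.
rewrite [leLHS]/Num.norm /=.
have [->|/mx_norm_neq0 [[i j] ->]] := eqVneq (mx_norm u) 0; first exact: enorm_ge0.
by rewrite /= (ord1 i); exact: normr_coord_le_enorm.
Qed.

Lemma enorm_le_mxnorm (u : E) : enorm u <= n%:R * `|u|.
Proof.
have coord_le i : `|u ord0 i| <= `|u|.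
  by rewrite [leRHS]/Num.norm /= mx_normrE; exact: (le_bigmax _ _ (ord0, i)).
rewrite -(ger0_norm (mulr_ge0 (ler0n _ n) (normr_ge0 u))) -sqrtr_sqr.
rewrite ler_sqrt ?sqr_ge0 //; apply: (@le_trans _ _ (\sum_(i < n) `|u| ^+ 2)).
  apply: ler_sum => i _; rewrite -real_normK ?num_real //.
  by rewrite lerXn2r ?nnegrE ?coord_le.
rewrite sumr_const card_ord exprMn mulrC -[`|u| ^+ 2 *+ n]mulr_natr.
rewrite ler_wpM2l ?sqr_ge0 //.
by rewrite -natrX ler_nat; case: n => // k; rewrite expnS leq_pmulr.
Qed.

Lemma edistC (x y : E) : edist x y = edist y x.
Proof. by rewrite /Defs.edist -opprB enormN. Qed.

Lemma edist_triangle (x y z : E) : edist x z <= edist x y + edist y z.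
Proof.
rewrite /Defs.edist (_ : x - z = (x - y) + (y - z)); first exact: enormD.
by rewrite addrA subrK.
Qed.

Lemma edist_ge0 (x y : E) : 0 <= edist x y.
Proof. exact: enorm_ge0. Qed.

Lemma edistxx (x : E) : edist x x = 0.
Proof. by rewrite /Defs.edist subrr /enorm big1 ?sqrtr0 // => i _; rewrite mxE expr0n. Qed.

Lemma continuous_edist (y : E) : continuous (edist y).
Proof.
apply: (@lipschitz_continuous _ _ _ (n%:R + 1)) => [|z w]; first by rewrite ltr_wpDl.
have := edist_triangle y z w; have := edist_triangle y w z; rewrite (edistC w z) => yz yw.
apply: (@le_trans _ _ (edist z w)); first by rewrite ler_norml; apply/andP; split; lra.
by apply: le_trans (enorm_le_mxnorm _) _; rewrite ler_wpM2r ?lerDl.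
Qed.

Lemma closed_edist_le (y : E) (c : R) : closed [set w | edist y w <= c].
Proof.
apply: (@preimage_closed _ _ (edist y) [set x | x <= c]); last exact: closed_le.
by move=> z _; exact: continuous_edist.
Qed.

Lemma closed_edist_ge (y : E) (c : R) : closed [set w | c <= edist y w].
Proof.
apply: (@preimage_closed _ _ (edist y) [set x | c <= x]); last exact: closed_ge.
by move=> z _; exact: continuous_edist.
Qed.

Lemma closure_edist (S : set E) z e :
  closure S z -> 0 < e -> exists2 s, S s & edist z s < e.
Proof.
move=> Sz e0; have C0 : 0 < n%:R + 1 :> R by rewrite ltr_wpDl.
have [s [Ss zs]] := Sz _ (nbhsx_ballx z _ (divr_gt0 e0 C0)).
exists s => //; move: zs; rewrite -ball_normE /= => zs.
apply: le_lt_trans (enorm_le_mxnorm _) _.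
apply: (@le_lt_trans _ _ ((n%:R + 1) * `|z - s|)); first by rewrite ler_wpM2r ?lerDl.
by rewrite mulrC -ltr_pdivlMr.
Qed.

Lemma interior_edist (V : set E) a :
  interior V a -> exists2 e, 0 < e & forall w, edist a w < e -> V w.
Proof.
move=> /nbhs_ballP [e e0 aeV]; exists e => // w aw; apply: aeV.
by rewrite -ball_normE /=; exact: le_lt_trans (mxnorm_le_enorm _) aw.
Qed.

End Euclidean.

Section Nearest.
Variables (R : realType) (n : nat).
Local Notation E := 'rV[R]_n.
Implicit Types (A : set E) (x p q : E).

Definition nearest A x p := A p /\ forall q, A q -> edist x p <= edist x q.

Lemma dist_set_le A x p : A p -> (dist_set A x <= (edist x p)%:E)%E.
Proof. by move=> Ap; apply: ereal_inf_lbound; exists p. Qed.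

Lemma dist_set_nearest A x p : nearest A x p -> dist_set A x = (edist x p)%:E.
Proof.
move=> [Ap pmin]; apply/le_anti; rewrite dist_set_le //=.
by apply: le_ereal_inf_tmp => _ [q Aq <-]; rewrite lee_fin pmin.
Qed.

Lemma DeltaP A x : Delta A x <-> exists p q, [/\ p <> q, nearest A x p & nearest A x q].
Proof.
split=> [[p [q [Ap Aq pq xp xq]]]|[p [q [pq xp xq]]]].
  have near_of r : A r -> (edist x r)%:E = dist_set A x -> nearest A x r.
    by move=> Ar xr; split=> // s As; rewrite -lee_fin xr dist_set_le.
  by exists p, q; split=> //; exact: near_of.
by exists p, q; split; [case: xp | case: xq | | exact/esym/dist_set_nearest ..].
Qed.

Lemma nearest_sub A B x p : A `<=` B -> A p -> nearest B x p -> nearest A x p.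
Proof. by move=> AB Ap [_ pmin]; split=> // q /AB; exact: pmin. Qed.

Lemma dist_set_closure A x : dist_set (closure A) x = dist_set A x.
Proof.
apply/le_anti; apply/andP; split.
  by apply: ereal_inf_le_tmp; apply: image_subset; exact: subset_closure.
apply: le_ereal_inf_tmp => _ [z Az <-]; apply/lee_addgt0Pr => e e0.
have [p Ap zp] := closure_edist Az e0.
apply: le_trans (dist_set_le x Ap) _; rewrite -EFinD lee_fin.
by apply: le_trans (edist_triangle x z p) _; rewrite lerD2l ltW.
Qed.

Lemma reach_le_edist A p x : A p -> Delta A x -> (reach A <= (edist p x)%:E)%E.
Proof.
move=> Ap Dx; apply: (@le_trans _ _ (reach_at A p)).
  by apply: ereal_inf_lbound; exists p.
by apply: dist_set_le; exact: subset_closure.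
Qed.

Lemma nearest_exists A x : closed A -> A !=set0 -> exists p, nearest A x p.
Proof.
move=> Acl [p0 Ap0]; pose K := A `&` [set w | edist x w <= edist x p0].
have Kcompact : compact K.
  apply: bounded_closed_compact; last by apply: closedI => //; exact: closed_edist_le.
  have xr : `|x| + edist x p0 \is Num.real by rewrite num_real.
  apply: filterS (nbhs_pinfty_ge xr) => M xM w [_ /= xw]; apply: le_trans xM.
  rewrite -[w](subrK x) -[w - x]opprB; apply: le_trans (ler_normD _ _) _.
  by rewrite normrN addrC lerD2l; apply: le_trans (mxnorm_le_enorm _) xw.
have Kcont : {within K, continuous (edist x)}.
  by apply: continuous_subspaceT => w; exact: continuous_edist.
have K0 : K !=set0 by exists p0; rewrite /K; split => /=.
have [p /set_mem [Ap xp] pmin] := compact_EVT_min K0 Kcompact Kcont.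
exists p; split=> // q Aq; have [xq|/ltW qx] := leP (edist x q) (edist x p0).
  by apply: pmin; apply/mem_set.
exact: le_trans xp qx.
Qed.

End Nearest.

Section Reach.
Variables (R : realType) (n : nat).
Local Notation E := 'rV[R]_n.
Implicit Types (W V : set E) (x y a : E).

Lemma almost_nearest_close W y a eps : closed W -> nearest W y a ->
  ((edist y a)%:E < reach W)%E -> 0 < eps ->
  exists2 eta, 0 < eta & forall w, W w -> edist y w < edist y a + eta -> edist a w < eps.
Proof.
move=> Wcl ya ya_reach eps0; apply: contrapT => no_eta.
have far eta :
    0 < eta -> exists w, [/\ W w, edist y w < edist y a + eta & eps <= edist a w].
  move=> eta0; apply: contrapT => no_w; apply: no_eta; exists eta => // w Ww yw.
  by rewrite ltNge; apply/negP => aw; apply: no_w; exists w.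
pose K := W `&` [set w | eps <= edist a w].
have Kcl : closed K by apply: closedI => //; exact: closed_edist_ge.
have [w1 [Ww1 _ aw1]] := far 1 ltr01.
have [c [[Wc ac] cmin]] := nearest_exists y Kcl (ex_intro _ w1 (conj Ww1 aw1)).
have yc : edist y c <= edist y a.
  apply/ler_addgt0Pr => e e0; have [w [Ww yw aw]] := far e e0.
  exact/ltW/(le_lt_trans (cmin w (conj Ww aw)) yw).
have Dy : Delta W y.
  apply/DeltaP; exists a, c; split=> //.
  - by move=> ca; move: ac; rewrite /= -ca edistxx leNgt eps0.
  - by case: ya => Wa amin; split=> // q Wq; apply: le_trans yc (amin q Wq).
have := reach_le_edist ya.1 Dy; rewrite edistC => reach_le.
by move: ya_reach; rewrite ltNge reach_le.
Qed.

Definition lerp x a (t : R) : E := x + t *: (a - x).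

Lemma lerp0 x a : lerp x a 0 = x.
Proof. by rewrite /lerp scale0r addr0. Qed.

Lemma lerp1 x a : lerp x a 1 = a.
Proof. by rewrite /lerp scale1r addrC subrK. Qed.

Lemma edist_lerp x a t t' : edist (lerp x a t) (lerp x a t') = `|t - t'| * edist x a.
Proof.
rewrite /Defs.edist /lerp opprD addrACA subrr add0r -scalerBl enormZ.
by rewrite -/(edist a x) edistC.
Qed.

(* The ball centred at [lerp x a t] of radius [(1 - t) * edist x a] passes through [a]
   and shrinks as [t] grows; [ts] is the first time it no longer meets [W]. *)
Lemma tangent_ball_threshold W x a : (exists2 w, W w & edist x w < edist x a) ->
  exists ts, [/\ 0 < ts <= 1,
    forall w, W w -> (1 - ts) * edist x a <= edist (lerp x a ts) w &
    forall t, 0 <= t < ts -> exists2 w, W w & edist (lerp x a t) w < (1 - t) * edist x a].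
Proof.
set r := edist x a => -[w0 Ww0 xw0].
have r0 : 0 < r by apply: le_lt_trans xw0; exact: edist_ge0.
pose T := [set t | 0 <= t <= 1 /\ forall w, W w -> (1 - t) * r <= edist (lerp x a t) w].
have T1 : T 1 by split=> [|w _]; rewrite ?ler01 ?lexx // subrr mul0r edist_ge0.
have Tinf : has_inf T by split; [exists 1 | exists 0 => t [/andP[]]].
have ts_lb t : T t -> inf T <= t by move=> Tt; apply: ge_inf => //; case: Tinf.
have ts0 : 0 <= inf T by apply: lb_le_inf; [exists 1 | move=> t [/andP[]]].
have ts_free w : W w -> (1 - inf T) * r <= edist (lerp x a (inf T)) w.
  move=> Ww; apply/ler_addgt0Pr => e e0.
  have [t Tt t_lt] := inf_adherent (divr_gt0 (divr_gt0 e0 (ltr0n _ 2)) r0) Tinf.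
  have := edist_triangle (lerp x a t) (lerp x a (inf T)) w.
  rewrite edist_lerp -/r ger0_norm ?subr_ge0 ?ts_lb // => tw.
  case: Tt => _ Tt.
  have : (t - inf T) * r < e / 2 by rewrite -ltr_pdivlMr // ltrBlDl.
  have := Tt w Ww; nra.
exists (inf T); split=> [||t /andP[t0 t_lt]].
- rewrite ts_lb // andbT lt_neqAle ts0 andbT; apply/eqP => ts_eq0.
  by have := ts_free w0 Ww0; rewrite -ts_eq0 subr0 mul1r lerp0 leNgt xw0.
- exact: ts_free.
- apply: contrapT => no_w; have /ts_lb : T t.
    split=> [|w Ww]; first by rewrite t0 /=; apply: le_trans (ltW t_lt) (ts_lb _ T1).
    by rewrite leNgt; apply/negP => tw; apply: no_w; exists w.
  by rewrite leNgt t_lt.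
Qed.

Lemma nearest_boundary W V x a : closed W -> nearest (W `&` V) x a ->
  ((edist x a)%:E < reach W)%E -> (exists2 w, W w & edist x w < edist x a) -> boundary V a.
Proof.
move=> Wcl [[Wa Va] amin] a_reach closer.
have [ts [/andP[ts0 ts1] ts_free ts_hit]] := tangent_ball_threshold closer.
set r := edist x a in a_reach amin ts_free ts_hit.
have r0 : 0 < r by case: closer => w _; apply: le_lt_trans; exact: edist_ge0.
pose y := lerp x a ts.
have ya : edist y a = (1 - ts) * r.
  by rewrite -[in edist y a](lerp1 x a) edist_lerp distrC ger0_norm ?subr_ge0.
have ya_nearest : nearest W y a by split=> // w Ww; rewrite ya; exact: ts_free.
have ya_reach : ((edist y a)%:E < reach W)%E.
  by apply: le_lt_trans a_reach; rewrite lee_fin ya; nra.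
split; first exact: subset_closure.
move=> /interior_edist [eps eps0 aV].
have [eta eta0 close] := almost_nearest_close Wcl ya_nearest ya_reach eps0.
(* Just before [ts] the ball meets [W] at some [w], which is then an [eta]-almost nearest
   point of [W] from [y], yet lies in the open ball [B(x, r)] that avoids [W `&` V]. *)
pose dd := Num.min ts (eta / 4 / r).
have dd0 : 0 < dd by rewrite lt_min ts0 !divr_gt0.
have dd_ts : dd <= ts by rewrite ge_min lexx.
have dd_r : dd * r <= eta / 4 by rewrite -ler_pdivlMr // ge_min lexx orbT.
have [w Ww tw] : exists2 w, W w & edist (lerp x a (ts - dd)) w < (1 - (ts - dd)) * r.
  by apply: ts_hit; rewrite subr_ge0 dd_ts ltrBlDr ltrDl.
have xt : edist x (lerp x a (ts - dd)) = (ts - dd) * r.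
  by rewrite -{1}(lerp0 x a) edist_lerp -/r sub0r normrN ger0_norm ?subr_ge0.
have nVw : ~ V w.
  move=> Vw; have := amin w (conj Ww Vw).
  have := edist_triangle x (lerp x a (ts - dd)) w; rewrite xt; lra.
apply/nVw/aV/close => //.
have := edist_triangle y (lerp x a (ts - dd)) w.
rewrite edist_lerp -/r ya subKr (ger0_norm (ltW dd0)); nra.
Qed.

Lemma reach_min_le_Delta W V x p : closed W -> closed V ->
  Delta (W `&` V) x -> (W `&` V) p ->
  (Order.min (reach W) (reach (W `&` boundary V)) <= (edist p x)%:E)%E.
Proof.
move=> Wcl Vcl /DeltaP [a [b [ab xa xb]]] Ap.
have xba : edist x b = edist x a by apply/le_anti; rewrite (xb.2 a xa.1) (xa.2 b xb.1).
apply: (@le_trans _ _ (edist x a)%:E); first last.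
  by rewrite lee_fin (edistC p); exact: xa.2.
rewrite leNgt lt_min; apply/negP => /andP[a_reachW a_reachB].
have [closer|far] := pselect (exists2 w, W w & edist x w < edist x a).
- have WB_sub : W `&` boundary V `<=` W `&` V.
    by move=> w [Ww [Vw _]]; split=> //; rewrite (closure_id V).1.
  have near_B c : nearest (W `&` V) x c -> edist x c = edist x a ->
      nearest (W `&` boundary V) x c.
    move=> xc xca; apply: (nearest_sub WB_sub _ xc); split; first exact: xc.1.1.
    by apply: (nearest_boundary Wcl xc); rewrite xca.
  have DB : Delta (W `&` boundary V) x.
    by apply/DeltaP; exists a, b; split; [ | exact: near_B xa _ | exact: near_B xb xba].
  have := reach_le_edist (near_B a xa erefl).1 DB; rewrite edistC => reach_le.
  by move: a_reachB; rewrite ltNge reach_le.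
- have near_W c : nearest (W `&` V) x c -> edist x c = edist x a -> nearest W x c.
    move=> [[Wc _] _] xca; split=> // q Wq; rewrite xca leNgt.
    by apply/negP => qa; apply: far; exists q.
  have DW : Delta W x.
    by apply/DeltaP; exists a, b; split; [ | exact: near_W xa _ | exact: near_W xb xba].
  have := reach_le_edist xa.1.1 DW; rewrite edistC => reach_le.
  by move: a_reachW; rewrite ltNge reach_le.
Qed.

End Reach.

Unset Implicit Arguments.

Theorem theorem2p4 (R : realType) (n : nat) (V W : set 'rV[R]_n) :
  closed V -> closed W ->
  (Order.min (reach W) (reach (W `&` boundary V)) <= reach (W `&` V))%E.
Proof.
move=> Vcl Wcl; apply: le_ereal_inf_tmp => _ [p Ap <-].
rewrite /reach_at /medial_axis dist_set_closure.
by apply: le_ereal_inf_tmp => _ [x Dx <-]; exact: reach_min_le_Delta.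
Qed.
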